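(* Let $C>0$ be a constant such that $-\widetilde{\sigma}(\beta)\geq C\, l(\beta)$ for all positive $b$-braids $\beta$. Then for every positive $b$-braid $\beta$, $-\sigma(\beta)\geq C\, l(\beta)-b+1$.
   Context: A positive $b$-braid is an element of the braid group $B_b$, with standard generators $a_1,\dots,a_{b-1}$, that can be written as a word using only positive powers of the generators; its length $l(\beta)$ is the number of letters in such a word. $\sigma(\beta)$ is the signature of the standard closure of $\beta$, with sign convention such that $\sigma(a_1^n)=1-n$ for $n\ge 1$. The asymptotic signature is $\widetilde{\sigma}(\beta)=\lim_{i\to\infty}\sigma(\beta^i)/i$. *)

From Stdlib Require Import ClassicalEpsilon.
From Stdlib Require Import Reals.
From HB Require Import structures.
From mathcomp Require Import all_boot all_order all_algebra.
Set Implicit Arguments. Unset Strict Implicit. Unset Printing Implicit Defensive.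
Import Order.TTheory GRing.Theory Num.Theory.

Definition asbool (P : Prop) : bool :=
  if excluded_middle_informative P then true else false.

Local Open Scope ring_scope.

Definition posdef_subspace (n k : nat) (A : 'M[rat]_n) : Prop :=
  exists B : 'M[rat]_(k, n),
    row_free B /\
    forall x : 'rV[rat]_k, x != 0 ->
      0 < ((x *m B) *m A *m (x *m B)^T) ord0 ord0.

Definition pos_index (n : nat) (A : 'M[rat]_n) : nat :=
  \max_(k < n.+1 | asbool (posdef_subspace k A)) k.

Definition neg_index (n : nat) (A : 'M[rat]_n) : nat := pos_index (- A).

(* A positive b-braid word is a sequence of letters in 'I_(b.-1);
   the letter k : 'I_(b.-1) stands for the generator a_(k+1). *)
Local Open Scope nat_scope.

Definition letter_positions (w : seq nat) (k : nat) : seq nat :=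
  [seq i <- iota 0 (size w) | nth 0 w i == k].

(* They form a basis of H_1 of the canonical Seifert surface
   of the closure (b disks, one half-twisted band per letter). *)
Definition bricks (b : nat) (w : seq nat) : seq (nat * nat * nat) :=
  flatten [seq (let ps := letter_positions w k in
                [seq (k, pq.1, pq.2) | pq <- zip ps (behead ps)])
          | k <- iota 0 b.-1].

(* symmetrized Seifert form V + V^T evaluated on two bricks *)
Local Open Scope ring_scope.
Definition brick_entry (x y : nat * nat * nat) : rat :=
  let: (k, p, q) := x in
  let: (l, r, s) := y in
  if x == y then (-2 : rat)
  else if (k == l) && ((q == r) || (s == p)) then (1 : rat)
  else if l == k.+1 then
    (if [&& (p < r)%N, (r < q)%N & (q < s)%N] then (1 : rat)
     else if [&& (r < p)%N, (p < s)%N & (s < q)%N] then (-1 : rat) else (0 : rat))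
  else if k == l.+1 then
    (if [&& (r < p)%N, (p < s)%N & (s < q)%N] then (1 : rat)
     else if [&& (p < r)%N, (r < q)%N & (q < s)%N] then (-1 : rat) else (0 : rat))
  else (0 : rat).

Local Close Scope ring_scope.
Definition word_nat (b : nat) (w : seq 'I_b.-1) : seq nat := [seq nat_of_ord k | k <- w].

Definition seifert_sym (b : nat) (w : seq 'I_b.-1) :
  'M[rat]_(size (bricks b (word_nat w))) :=
  let br := bricks b (word_nat w) in
  \matrix_(i < size br, j < size br)
     brick_entry (nth (0, 0, 0) br i) (nth (0, 0, 0) br j).

(* signature of the closure of the positive braid word w, as a real number;
   sign convention: sigma(a_1^n) = 1 - n *)
Definition braid_signature (b : nat) (w : seq 'I_b.-1) : R :=
  Rminus (INR (pos_index (seifert_sym w))) (INR (neg_index (seifert_sym w))).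

Definition braid_length (b : nat) (w : seq 'I_b.-1) : nat := size w.

Definition braid_pow (b : nat) (w : seq 'I_b.-1) (i : nat) : seq 'I_b.-1 :=
  flatten (nseq i w).

(* The Seifert surface of the closure of a positive braid word [w] on [b]
   strands has a basis of "bricks", one for each pair of consecutive
   occurrences of a generator in [w].  For a product [u v], the bricks of [u]
   and the shifted bricks of [v] span a subspace on which the symmetrized
   Seifert form is the orthogonal sum of those of [u] and [v], and there are
   at most [b - 1] further bricks, one per generator.  Comparing indices of
   inertia gives the almost-superadditivity
     sigma(u v) >= sigma(u) + sigma(v) - (b - 1),
   hence sigma(w^n) >= n (sigma(w) - (b - 1)), and in the limit
   sigma~(w) >= sigma(w) - (b - 1), which combined with the hypothesis on the
   asymptotic signature yields the claim. *)

From Stdlib Require Import Reals Lra Lia ClassicalEpsilon.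
From mathcomp Require Import all_boot all_order all_algebra.
From mathcomp Require Import zify.
Set Implicit Arguments. Unset Strict Implicit. Unset Printing Implicit Defensive.
Import Order.TTheory GRing.Theory Num.Theory.

Local Open Scope ring_scope.

Definition qform (R : pzRingType) n (A : 'M[R]_n) (x : 'rV[R]_n) : R :=
  (x *m A *m x^T) ord0 ord0.

Section QuadraticForm.
Variable R : comPzRingType.

Lemma qform0 n (A : 'M[R]_n) : qform A 0 = 0.
Proof. by rewrite /qform !mul0mx mxE. Qed.

Lemma qform_congr m n (A : 'M[R]_n) (E : 'M[R]_(m, n)) x :
  qform (E *m A *m E^T) x = qform A (x *m E).
Proof. by rewrite /qform trmx_mul !mulmxA. Qed.

Lemma qformZ n (A : 'M[R]_n) c x : qform A (c *: x) = c ^+ 2 * qform A x.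
Proof. by rewrite /qform linearZ /= -scalemxAl -scalemxAr -scalemxAl scalerA mxE expr2.
Qed.

Lemma qformD_orth n (A : 'M[R]_n) x y :
  A^T = A -> x *m A *m y^T = 0 -> qform A (x + y) = qform A x + qform A y.
Proof.
move=> sA xAy; have yAx : y *m A *m x^T = 0.
  by apply: trmx_inj; rewrite !trmx_mul trmxK sA mulmxA xAy trmx0.
by rewrite /qform linearD /= !mulmxDl !mulmxDr xAy yAx addr0 add0r [LHS]mxE.
Qed.

Lemma qform_block s t (A : 'M[R]_s) (B : 'M[R]_t) y z :
  qform (block_mx A 0 0 B) (row_mx y z) = qform A y + qform B z.
Proof.
rewrite /qform mul_row_block !mulmx0 addr0 add0r tr_row_mx mul_row_col.
by rewrite mxE.
Qed.

End QuadraticForm.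

Section DefiniteSubspaces.
Variable R : realFieldType.

Definition posdef_on n k (A : 'M[R]_n) (V : 'M[R]_(k, n)) :=
  forall x : 'rV_k, x != 0 -> 0 < qform A (x *m V).

Definition nonpos_on n r (A : 'M[R]_n) (W : 'M[R]_(r, n)) :=
  forall z : 'rV_r, qform A (z *m W) <= 0.

Lemma posdef_on_row_free n k (A : 'M[R]_n) (V : 'M_(k, n)) :
  posdef_on A V -> row_free V.
Proof.
move=> posV; apply: inj_row_free => x xV0; apply/eqP/negPn/negP => /posV.
by rewrite xV0 qform0 ltxx.
Qed.

Lemma posdef_nonpos_rank n k r (A : 'M[R]_n) (V : 'M_(k, n)) (W : 'M_(r, n)) :
  posdef_on A V -> nonpos_on A W -> (k + \rank W <= n)%N.
Proof.
move=> posV nonposW.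
have VW0 : (V :&: W)%MS = 0.
  apply/row_matrixP => i; rewrite row0.
  have /submxP[x xV] : (row i (V :&: W) <= V)%MS.
    exact: submx_trans (row_sub _ _) (capmxSl _ _).
  have /submxP[z zW] : (row i (V :&: W) <= W)%MS.
    exact: submx_trans (row_sub _ _) (capmxSr _ _).
  have [x0 | x_neq0] := eqVneq x 0; first by rewrite xV x0 mul0mx.
  by have := nonposW z; rewrite -zW xV leNgt (posV _ x_neq0).
rewrite -(eqP (posdef_on_row_free posV)) -(mxrank_disjoint_sum VW0).
exact: rank_leq_col.
Qed.

Lemma posdef_on_col_mx n k (A : 'M[R]_n) (V : 'M_(k, n)) (w : 'rV_n) :
  A^T = A -> posdef_on A V -> 0 < qform A w -> w *m A *m V^T = 0 ->
  posdef_on A (col_mx w V).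
Proof.
move=> sA posV posw wAV x; rewrite -[x]hsubmxK mul_row_col.
set a := lsubmx x; set y := rsubmx x => x0.
have ayAV : (a *m w) *m A *m (y *m V)^T = 0.
  by rewrite trmx_mul -!mulmxA (mulmxA w) (mulmxA (w *m A)) wAV mul0mx mulmx0.
rewrite qformD_orth // [a]mx11_scalar mul_scalar_mx qformZ.
have [a0 | a_neq0] := eqVneq (a ord0 ord0) 0.
  rewrite a0 expr0n mul0r add0r posV //; apply: contraNneq x0 => ->.
  by rewrite [a]mx11_scalar a0 raddf0 row_mx0.
have yV_ge0 : 0 <= qform A (y *m V).
  by have [-> | y0] := eqVneq y 0; [rewrite mul0mx qform0 | exact/ltW/posV].
by rewrite ltr_pwDl // mulr_gt0 // exprn_even_gt0.
Qed.

Lemma posdef_on_congr m n k (A : 'M[R]_n) (E : 'M_(m, n)) (V : 'M_(k, m)) :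
  posdef_on (E *m A *m E^T) V -> posdef_on A (V *m E).
Proof. by move=> posV x /posV; rewrite qform_congr mulmxA. Qed.

Lemma nonpos_on_congr m n r (A : 'M[R]_n) (E : 'M_(m, n)) (W : 'M_(r, m)) :
  nonpos_on (E *m A *m E^T) W -> nonpos_on A (W *m E).
Proof. by move=> nonposW z; rewrite mulmxA -qform_congr. Qed.

Lemma posdef_on_block s t k l (A : 'M[R]_s) (B : 'M[R]_t)
    (V : 'M_(k, s)) (V' : 'M_(l, t)) :
  posdef_on A V -> posdef_on B V' ->
  posdef_on (block_mx A 0 0 B) (block_mx V 0 0 V').
Proof.
move=> posV posV' x; rewrite -[x]hsubmxK mul_row_block !mulmx0 addr0 add0r.
rewrite qform_block; set y := lsubmx x; set z := rsubmx x.
have [-> x0 | y0 _] := eqVneq y 0.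
  have z0 : z != 0 by apply: contraNneq x0 => ->; rewrite row_mx0.
  by rewrite mul0mx qform0 add0r posV'.
have [-> | z0] := eqVneq z 0; first by rewrite mul0mx qform0 addr0 posV.
exact: addr_gt0 (posV _ y0) (posV' _ z0).
Qed.

Lemma nonpos_on_block s t k l (A : 'M[R]_s) (B : 'M[R]_t)
    (W : 'M_(k, s)) (W' : 'M_(l, t)) :
  nonpos_on A W -> nonpos_on B W' ->
  nonpos_on (block_mx A 0 0 B) (block_mx W 0 0 W').
Proof.
move=> nonposW nonposW' z; rewrite -[z]hsubmxK mul_row_block !mulmx0 addr0 add0r.
by rewrite qform_block -[0]addr0 lerD.
Qed.

End DefiniteSubspaces.

Lemma asboolP (P : Prop) : reflect P (asbool P).
Proof. by rewrite /asbool; case: excluded_middle_informative => ?; constructor. Qed.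

Lemma posdef_on_pos_index n k (A : 'M[rat]_n) (V : 'M_(k, n)) :
  posdef_on A V -> (k <= pos_index A)%N.
Proof.
move=> posV; have k_lt : (k < n.+1)%N.
  by rewrite ltnS -(eqP (posdef_on_row_free posV)) rank_leq_col.
have subk : asbool (posdef_subspace k A).
  by apply/asboolP; exists V; split; [exact: posdef_on_row_free posV | exact: posV].
exact: (@leq_bigmax_cond _ (fun i : 'I_n.+1 => asbool (posdef_subspace i A))
          (fun i => nat_of_ord i) (Ordinal k_lt) subk).
Qed.

Lemma pos_index_posdef n (A : 'M[rat]_n) :
  exists V : 'M_(pos_index A, n), posdef_on A V.
Proof.
have posdef0 : asbool (posdef_subspace 0 A).
  by apply/asboolP; exists 0; split=> [|x]; rewrite ?thinmx0 ?eqxx // /row_free mxrank0.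
have nonempty : (0 < #|(fun i : 'I_n.+1 => asbool (posdef_subspace i A))|)%N.
  by apply/card_gt0P; exists ord0.
rewrite /pos_index.
have [i /asboolP[V [_ posV]] ->] := eq_bigmax_cond (fun i => nat_of_ord i) nonempty.
by exists V.
Qed.

Lemma pos_index_nonpos n r (A : 'M[rat]_n) (W : 'M_(r, n)) :
  nonpos_on A W -> (pos_index A + \rank W <= n)%N.
Proof.
move=> nonposW; have [V posV] := pos_index_posdef A.
exact: posdef_nonpos_rank posV nonposW.
Qed.

(* The witness is the A-orthogonal of a maximal positive definite subspace. *)
Lemma exists_nonpos_complement n (A : 'M[rat]_n) : A^T = A ->
  exists2 W : 'M_n, nonpos_on A W & (n <= \rank W + pos_index A)%N.
Proof.
move=> sA; have [V posV] := pos_index_posdef A.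
exists (kermx (A *m V^T)); last first.
  by rewrite mxrank_ker addnC -leq_subLR leq_sub2l // rank_leq_col.
move=> z; rewrite leNgt; apply/negP => posw.
have wAV : z *m kermx (A *m V^T) *m A *m V^T = 0.
  by rewrite -[z *m _ *m A *m V^T]mulmxA -mulmxA mulmx_ker mulmx0.
by have := posdef_on_pos_index (posdef_on_col_mx sA posV posw wAV); lia.
Qed.

Lemma pos_index_congr m n (A : 'M[rat]_n) (E : 'M_(m, n)) :
  (pos_index (E *m A *m E^T) <= pos_index A)%N.
Proof.
have [V posV] := pos_index_posdef (E *m A *m E^T).
exact/posdef_on_pos_index/posdef_on_congr/posV.
Qed.

Lemma pos_index_congr_row_free m n (A : 'M[rat]_n) (E : 'M_(m, n)) :
  A^T = A -> row_free E -> (pos_index A + m <= pos_index (E *m A *m E^T) + n)%N.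
Proof.
move=> sA freeE.
have sEAE : (E *m A *m E^T)^T = E *m A *m E^T.
  by rewrite !trmx_mul trmxK sA mulmxA.
have [W /nonpos_on_congr nonposWE rankW] := exists_nonpos_complement sEAE.
by have := pos_index_nonpos nonposWE; rewrite mxrankMfree //; lia.
Qed.

Lemma pos_index_block s t (A : 'M[rat]_s) (B : 'M[rat]_t) :
  A^T = A -> B^T = B ->
  pos_index (block_mx A 0 0 B) = (pos_index A + pos_index B)%N.
Proof.
move=> sA sB; apply/eqP; rewrite eqn_leq; apply/andP; split.
  have [W nonposW rankW] := exists_nonpos_complement sA.
  have [W' nonposW' rankW'] := exists_nonpos_complement sB.
  have := pos_index_nonpos (A := block_mx A 0 0 B) (nonpos_on_block nonposW nonposW').
  by rewrite rank_diag_block_mx; lia.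
have [V posV] := pos_index_posdef A; have [V' posV'] := pos_index_posdef B.
exact: posdef_on_pos_index (posdef_on_block posV posV').
Qed.

Lemma rowsub1_conj (R : comPzRingType) N m (h : 'I_m -> 'I_N) (M : 'M[R]_N) :
  rowsub h 1%:M *m M *m (rowsub h 1%:M)^T = mxsub h h M.
Proof.
apply/matrixP => i j; rewrite mul_rowsub_mx mul1mx !mxE (bigD1 (h j)) //=.
rewrite big1 => [|k /negbTE k_neq]; last by rewrite !mxE eq_sym k_neq mulr0.
by rewrite !mxE eqxx mulr1 addr0.
Qed.

Lemma row_free_rowsub1 (F : fieldType) N m (h : 'I_m -> 'I_N) :
  injective h -> row_free (rowsub h (1%:M : 'M[F]_N)).
Proof.
move=> h_inj; apply/row_freeP; exists (rowsub h 1%:M)^T.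
rewrite -[X in X *m _]mulmx1 rowsub1_conj; apply/matrixP => i j.
by rewrite !mxE (inj_eq h_inj).
Qed.

Lemma pos_index_mxsub N m (h : 'I_m -> 'I_N) (M : 'M[rat]_N) :
  (pos_index (mxsub h h M) <= pos_index M)%N.
Proof. by rewrite -rowsub1_conj pos_index_congr. Qed.

Lemma neg_index_mxsub_codim N m (h : 'I_m -> 'I_N) (M : 'M[rat]_N) :
  M^T = M -> injective h -> (neg_index M + m <= neg_index (mxsub h h M) + N)%N.
Proof.
move=> sM h_inj; have sNM : (- M)^T = - M by rewrite linearN /= sM.
rewrite /neg_index -rowsub1_conj -mulNmx -mulmxN.
by rewrite pos_index_congr_row_free ?row_free_rowsub1.
Qed.

Lemma neg_index_block s t (A : 'M[rat]_s) (B : 'M[rat]_t) :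
  A^T = A -> B^T = B ->
  neg_index (block_mx A 0 0 B) = (neg_index A + neg_index B)%N.
Proof.
move=> sA sB; rewrite /neg_index opp_block_mx !oppr0.
by rewrite pos_index_block // linearN /= ?sA ?sB.
Qed.

Local Close Scope ring_scope.

Definition consecutive_pairs (s : seq nat) := zip s (behead s).

Lemma consecutive_pairs_cons x s : consecutive_pairs (x :: s) = pairmap pair x s.
Proof. by elim: s x => //= y s IHs x; rewrite -IHs. Qed.

Lemma size_consecutive_pairs s : size (consecutive_pairs s) = (size s).-1.
Proof. by rewrite size_zip size_behead minnE subKn // leq_pred. Qed.

Lemma consecutive_pairs_map c s :
  consecutive_pairs (map (addn c) s) =
  [seq (c + pq.1, c + pq.2) | pq <- consecutive_pairs s].
Proof.
by case: s => //= x s; rewrite !consecutive_pairs_cons; elim: s x => //= y s ->.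
Qed.

Lemma consecutive_pairs_catl s1 s2 :
  {subset consecutive_pairs s1 <= consecutive_pairs (s1 ++ s2)}.
Proof.
case: s1 => // x s1 pq; rewrite cat_cons !consecutive_pairs_cons pairmap_cat.
by rewrite mem_cat => ->.
Qed.

Lemma consecutive_pairs_catr s1 s2 :
  {subset consecutive_pairs s2 <= consecutive_pairs (s1 ++ s2)}.
Proof.
case: s1 => // x s1 pq; rewrite cat_cons !consecutive_pairs_cons pairmap_cat.
case: s2 => // y s2; rewrite consecutive_pairs_cons mem_cat /= inE => ->.
by rewrite !orbT.
Qed.

Lemma mem_consecutive_pairs_sorted s p q : sorted ltn s ->
  (p, q) \in consecutive_pairs s -> (p < q) && (q \in s).
Proof.
case: s => // x s; rewrite consecutive_pairs_cons /=.
elim: s x => //= y s IHs x /andP[xy ys]; rewrite inE => /orP[/eqP[-> ->] | pq_in].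
  by rewrite xy !inE eqxx orbT.
by have /andP[-> q_in] := IHs y ys pq_in; rewrite in_cons q_in orbT.
Qed.

Lemma mem_letter_positions W k r :
  (r \in letter_positions W k) = (r < size W) && (nth 0 W r == k).
Proof. by rewrite mem_filter mem_iota add0n andbC. Qed.

Lemma letter_positions_sorted W k : sorted ltn (letter_positions W k).
Proof. by apply: sorted_filter; [exact: ltn_trans | exact: iota_ltn_sorted]. Qed.

Lemma letter_positions_cat U V k :
  letter_positions (U ++ V) k =
  letter_positions U k ++ map (addn (size U)) (letter_positions V k).
Proof.
rewrite /letter_positions size_cat iotaD filter_cat add0n.
have -> : iota (size U) (size V) = map (addn (size U)) (iota 0 (size V)).
  by rewrite -iotaDl addn0.
rewrite filter_map.
congr (_ ++ _); last congr map.
  by apply: eq_in_filter => i; rewrite mem_iota add0n /= => i_lt; rewrite nth_cat i_lt.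
by apply: eq_filter => i /=; rewrite nth_cat ltnNge leq_addr addKn.
Qed.

Section Bricks.
Variable b : nat.

Lemma mem_bricks W k p q :
  ((k, p, q) \in bricks b W) =
  (k < b.-1) && ((p, q) \in consecutive_pairs (letter_positions W k)).
Proof.
apply/allpairsPdep/andP => [[l [[p' q'] [l_in pq_in [-> -> ->]]]] | [k_lt pq_in]].
  by rewrite mem_iota in l_in.
by exists k, (p, q); rewrite mem_iota.
Qed.

Lemma uniq_bricks W : uniq (bricks b W).
Proof.
apply: allpairs_uniq_dep => [|k _|[k pq] [k' pq'] _ _ /= [<-]]; first exact: iota_uniq.
  exact/zip_uniql/filter_uniq/iota_uniq.
by case: pq pq' => p q [p' q'] /= -> ->.
Qed.

Lemma size_bricks W :
  size (bricks b W) = \sum_(k <- iota 0 b.-1) (size (letter_positions W k)).-1.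
Proof.
rewrite size_allpairs_dep sumnE big_map.
by apply: eq_bigr => k _; rewrite size_consecutive_pairs.
Qed.

(* Each letter contributes at most one brick straddling the junction. *)
Lemma size_bricks_cat U V :
  size (bricks b (U ++ V)) <= size (bricks b U) + size (bricks b V) + b.-1.
Proof.
rewrite !size_bricks -[X in _ + X](size_iota 0) -sum1_size -!big_split /=.
by apply: leq_sum => k _; rewrite letter_positions_cat size_cat size_map; lia.
Qed.

Definition shift_brick c (x : nat * nat * nat) := (x.1.1, c + x.1.2, c + x.2).

Lemma bricks_catl U V x : x \in bricks b U -> x \in bricks b (U ++ V).
Proof.
case: x => [[k p] q]; rewrite !mem_bricks letter_positions_cat => /andP[-> pq].
exact: consecutive_pairs_catl.
Qed.

Lemma bricks_catr U V x :
  x \in bricks b V -> shift_brick (size U) x \in bricks b (U ++ V).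
Proof.
case: x => [[k p] q]; rewrite !mem_bricks letter_positions_cat => /andP[-> pq].
apply: consecutive_pairs_catr; rewrite consecutive_pairs_map.
exact: (map_f (fun pq => (size U + pq.1, size U + pq.2)) pq).
Qed.

Lemma brick_bounds W x : x \in bricks b W -> x.1.2 < x.2 < size W.
Proof.
case: x => [[k p] q]; rewrite mem_bricks => /andP[_].
move/(mem_consecutive_pairs_sorted (letter_positions_sorted _ _)).
by rewrite mem_letter_positions => /and3P[-> ->].
Qed.

End Bricks.

Lemma brick_entry_shift c x y :
  brick_entry (shift_brick c x) (shift_brick c y) = brick_entry x y.
Proof.
case: x y => [[k p] q] [[l r] s].
by rewrite /brick_entry /shift_brick /= !xpair_eqE !eqn_add2l !ltn_add2l.
Qed.

Lemma brick_entryC x y : brick_entry x y = brick_entry y x.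
Proof.
case: x y => [[k p] q] [[l r] s]; rewrite /brick_entry [_ == (k, p, q)]eq_sym.
case: eqP => // _; rewrite [l == k]eq_sym [s == p]eq_sym.
rewrite [(q == r) || _]orbC.
by (do ! case: ifP) => //; lia.
Qed.

Lemma brick_entry_apart x y :
  x.1.2 < x.2 -> x.2 < y.1.2 -> y.1.2 < y.2 -> brick_entry x y = 0%R.
Proof.
case: x y => [[k p] q] [[l r] s] /= pq qr rs; rewrite /brick_entry !xpair_eqE.
by (do ! case: ifP) => //; lia.
Qed.

Lemma brick_entry_cat b U V x y : x \in bricks b U -> y \in bricks b V ->
  brick_entry x (shift_brick (size U) y) = 0%R.
Proof.
case: x y => [[k p] q] [[l r] s] /brick_bounds x_bnd /brick_bounds y_bnd.
by rewrite /= in x_bnd y_bnd; rewrite brick_entry_apart //=; lia.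
Qed.

Definition brick_matrix b (W : seq nat) : 'M[rat]_(size (bricks b W)) :=
  \matrix_(i, j) brick_entry (nth (0, 0, 0) (bricks b W) i)
                              (nth (0, 0, 0) (bricks b W) j).

Lemma brick_matrix_sym b W : ((brick_matrix b W)^T)%R = brick_matrix b W.
Proof. by apply/matrixP => i j; rewrite !mxE brick_entryC. Qed.

Section BrickMatrixCat.
Variables (b : nat) (U V : seq nat).
Local Notation BU := (bricks b U).
Local Notation BV := (bricks b V).
Local Notation BUV := (bricks b (U ++ V)).

Definition cat_bricks := BU ++ map (shift_brick (size U)) BV.

Lemma uniq_cat_bricks : uniq cat_bricks.
Proof.
rewrite cat_uniq uniq_bricks map_inj_uniq ?uniq_bricks => [|[[k p] q] [[l r] s] /=].
  rewrite andbT; apply/hasPn => _ /mapP[x /brick_bounds x_bnd ->].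
  by apply/negP => /brick_bounds /=; lia.
by case=> -> /addnI -> /addnI ->.
Qed.

Lemma cat_bricks_sub : {subset cat_bricks <= BUV}.
Proof.
move=> x; rewrite mem_cat => /orP[/bricks_catl // | /mapP[y y_in ->]].
exact: bricks_catr.
Qed.

Lemma size_cat_bricks : size cat_bricks = (size BU + size BV)%N.
Proof. by rewrite size_cat size_map. Qed.

Definition cat_brick (i : 'I_(size BU + size BV)) := nth (0, 0, 0) cat_bricks i.

Lemma cat_brick_index_lt i : (index (cat_brick i) BUV < size BUV)%N.
Proof. by rewrite index_mem cat_bricks_sub // mem_nth // size_cat_bricks. Qed.

Definition cat_brick_index i : 'I_(size BUV) := Ordinal (cat_brick_index_lt i).

Lemma cat_brick_index_inj : injective cat_brick_index.
Proof.
move=> i j /(congr1 (fun k => nth (0, 0, 0) BUV (val k))) /=.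
rewrite !nth_index ?cat_bricks_sub ?mem_nth ?size_cat_bricks // => /eqP.
by rewrite nth_uniq ?size_cat_bricks ?uniq_cat_bricks // => /eqP/val_inj.
Qed.

Lemma brick_matrix_cat :
  mxsub cat_brick_index cat_brick_index (brick_matrix b (U ++ V)) =
  block_mx (brick_matrix b U) 0%R 0%R (brick_matrix b V).
Proof.
have nth_cat_brick_index i : nth (0, 0, 0) BUV (cat_brick_index i) = cat_brick i.
  by rewrite nth_index ?cat_bricks_sub ?mem_nth ?size_cat_bricks.
have brickl a : cat_brick (lshift _ a) = nth (0, 0, 0) BU a.
  by rewrite /cat_brick nth_cat /= ltn_ord.
have brickr c : cat_brick (rshift _ c) = shift_brick (size U) (nth (0, 0, 0) BV c).
  by rewrite /cat_brick nth_cat /= ltnNge leq_addr addKn (nth_map (0, 0, 0)).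
apply/matrixP => i j; rewrite -(splitK i) -(splitK j).
case: (split i) => a; case: (split j) => c /=.
- by rewrite block_mxEul !mxE !nth_cat_brick_index !brickl.
- rewrite block_mxEur !mxE !nth_cat_brick_index brickl brickr.
  by rewrite (brick_entry_cat (mem_nth _ (ltn_ord a)) (mem_nth _ (ltn_ord c))).
- rewrite block_mxEdl !mxE !nth_cat_brick_index brickl brickr brick_entryC.
  by rewrite (brick_entry_cat (mem_nth _ (ltn_ord c)) (mem_nth _ (ltn_ord a))).
- by rewrite block_mxEdr !mxE !nth_cat_brick_index !brickr brick_entry_shift.
Qed.

End BrickMatrixCat.

Lemma pos_index_brick_matrix_cat b U V :
  (pos_index (brick_matrix b U) + pos_index (brick_matrix b V) <=
   pos_index (brick_matrix b (U ++ V)))%N.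
Proof.
rewrite -pos_index_block ?brick_matrix_sym // -brick_matrix_cat.
exact: pos_index_mxsub.
Qed.

Lemma neg_index_brick_matrix_cat b U V :
  (neg_index (brick_matrix b (U ++ V)) <=
   neg_index (brick_matrix b U) + neg_index (brick_matrix b V) + b.-1)%N.
Proof.
have := neg_index_mxsub_codim (brick_matrix_sym b (U ++ V))
                              (@cat_brick_index_inj b U V).
rewrite brick_matrix_cat neg_index_block ?brick_matrix_sym //.
by have := size_bricks_cat b U V; lia.
Qed.

Local Open Scope R_scope.

Lemma seifert_symE b (w : seq 'I_b.-1) : seifert_sym w = brick_matrix b (word_nat w).
Proof. by []. Qed.

Lemma word_nat_cat b (u v : seq 'I_b.-1) : word_nat (u ++ v) = word_nat u ++ word_nat v.
Proof. exact: map_cat. Qed.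

Lemma braid_signature_cat b (u v : seq 'I_b.-1) :
  braid_signature u + braid_signature v - INR b.-1 <= braid_signature (u ++ v).
Proof.
rewrite /braid_signature !seifert_symE word_nat_cat.
have /ssrnat.leP/le_INR := pos_index_brick_matrix_cat b (word_nat u) (word_nat v).
have /ssrnat.leP/le_INR := neg_index_brick_matrix_cat b (word_nat u) (word_nat v).
rewrite !plus_INR; lra.
Qed.

Lemma braid_signature_pow b (w : seq 'I_b.-1) n :
  INR n.+1 * (braid_signature w - INR b.-1) <= braid_signature (braid_pow w n.+1).
Proof.
elim: n => [|n IHn].
  by rewrite /braid_pow /= cats0 Rmult_1_l; have := pos_INR b.-1; lra.
have -> : braid_pow w n.+2 = w ++ braid_pow w n.+1 by [].
have := braid_signature_cat w (braid_pow w n.+1).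
rewrite [INR n.+2]S_INR; lra.
Qed.

Lemma braid_signature_le_average b (w : seq 'I_b.-1) n :
  braid_signature w - INR b.-1 <= braid_signature (braid_pow w n.+1) / INR n.+1.
Proof.
have n_pos : 0 < INR n.+1 by apply: lt_0_INR; lia.
apply: (Rmult_le_reg_r (INR n.+1)) => //; rewrite /Rdiv Rmult_assoc Rinv_l; last lra.
by rewrite Rmult_1_r Rmult_comm; exact: braid_signature_pow.
Qed.

Lemma Un_cv_ge (u : nat -> R) l c : Un_cv u l -> (forall n, c <= u n.+1) -> c <= l.
Proof.
move=> u_cv c_le; apply: Rnot_lt_le => l_lt_c.
have [N /(_ N.+1 (Nat.le_succ_diag_r N))] := u_cv (c - l) ltac:(lra).
by rewrite /R_dist => u_close; have := Rle_abs (u N.+1 - l); have := c_le N; lra.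
Qed.

Theorem mainTheorem6 (b : nat) (hb : (0 < b)%N) (C : R) (hC : 0 < C)
  (Hasym : forall w : seq 'I_b.-1,
     exists L : R,
       Un_cv (fun i : nat => braid_signature (braid_pow w i) / INR i) L
       /\ - L >= C * INR (braid_length w)) :
  forall w : seq 'I_b.-1,
    - braid_signature w >= C * INR (braid_length w) - INR b + 1.
Proof.
move=> w; have [L [sig_cv L_le]] := Hasym w.
have := Un_cv_ge sig_cv (braid_signature_le_average w).
have : INR b = INR b.-1 + 1 by rewrite -S_INR prednK.
lra.
Qed.
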